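(* Let $L$ be a finite index set and let $Z=(Z^{(u)})_{u\in L}$, where each $Z^{(u)}\in\mathbb{R}^{n_u}$ (entries indexed by $j$). Let $k$ be a positive integer and, for each $u\in L$, let $\alpha^{(u)}_1,\alpha^{(u)}_2,\alpha^{(u)}_3,\alpha^{(u)}_4\ge 0$ with $\alpha^{(u)}_1\le\alpha^{(u)}_2$, and let $E_{\rm budget}\in\mathbb{R}$ with $C:=E_{\rm budget}-\sum_{u\in L}\alpha^{(u)}_4\ge 0$. For each $u$, fix a set $T^{(u)}$ of $\min(k,n_u)$ indices $j$ such that every $|Z^{(u)}_j|$ with $j\in T^{(u)}$ is at least every $|Z^{(u)}_{j'}|$ with $j'\notin T^{(u)}$ (ties broken arbitrarily), and define $A=(A^{(u)})_{u\in L}$ of the same shape as $Z$ by $A^{(u)}_j=\alpha^{(u)}_1+\alpha^{(u)}_3$ if $j\in T^{(u)}$ and $A^{(u)}_j=\alpha^{(u)}_2+\alpha^{(u)}_3$ otherwise. Consider the projection problem $$\mathrm{P}_{\Omega(E_{\rm budget})}(Z):=\operatorname{argmin}_{W\in\Omega(E_{\rm budget})}\|W-Z\|^2$$ and the $0/1$ knapsack problem $$\max_{\xi\ \text{binary, same shape as } Z}\ \langle Z\odot Z,\xi\rangle\quad\text{s.t.}\quad \langle A,\xi\rangle\le C.$$ Then these problems are equivalent: $\min_{W\in\Omega(E_{\rm budget})}\|W-Z\|^2=\|Z\|^2-\max\{\langle Z\odot Z,\xi\rangle:\xi\text{ binary},\ \langle A,\xi\rangle\le C\}$, and if $\xi^*$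 is an optimal solution of the knapsack problem, then $Z\odot\xi^*\in\Omega(E_{\rm budget})$ and $Z\odot\xi^*$ is an optimal solution of the projection problem.
   Context: For $W=(W^{(u)})_{u\in L}$ with $W^{(u)}\in\mathbb{R}^{n_u}$, $\|W^{(u)}\|_0$ denotes the number of nonzero entries and $\|W\|^2=\sum_u\sum_j (W^{(u)}_j)^2$. The energy-constraint set is $$\Omega(E_{\rm budget})=\Big\{W:\ \sum_{u\in L}\Big(\alpha^{(u)}_1\min(k,\|W^{(u)}\|_0)+\alpha^{(u)}_2\max(0,\|W^{(u)}\|_0-k)+\alpha^{(u)}_3\|W^{(u)}\|_0+\alpha^{(u)}_4\Big)\le E_{\rm budget}\Big\}.$$ $\odot$ is the entrywise product, $\langle\cdot,\cdot\rangle$ the entrywise inner product, and ''binary'' means all entries lie in $\{0,1\}$. *)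

From HB Require Import structures.
From mathcomp Require Import all_boot all_order all_algebra.
Set Implicit Arguments. Unset Strict Implicit. Unset Printing Implicit Defensive.
Import Order.TTheory GRing.Theory Num.Theory.
Local Open Scope ring_scope.

Definition lfam (R : Type) (L : finType) (n : L -> nat) :=
  forall u : L, 'I_(n u) -> R.

Section Defs.
Variables (R : realFieldType) (L : finType) (n : L -> nat).

Definition nnz (W : lfam R n) (u : L) : nat := #|[pred j | W u j != 0]|.

Definition sqnorm (W : lfam R n) : R := \sum_(u : L) \sum_(j : 'I_(n u)) W u j ^+ 2.

Definition inner (X Y : lfam R n) : R := \sum_(u : L) \sum_(j : 'I_(n u)) X u j * Y u j.

Definition hadamard (X Y : lfam R n) : lfam R n := fun u j => X u j * Y u j.

Definition fsub (X Y : lfam R n) : lfam R n := fun u j => X u j - Y u j.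

Definition binary (xi : lfam R n) : Prop := forall u j, xi u j = 0 \/ xi u j = 1.

(* energy of W; (nnz - k)%N is truncated, i.e. max(0, nnz - k) *)
Definition energy (k : nat) (a1 a2 a3 a4 : L -> R) (W : lfam R n) : R :=
  \sum_(u : L) (a1 u * (minn k (nnz W u))%:R + a2 u * (nnz W u - k)%:R
                + a3 u * (nnz W u)%:R + a4 u).

Definition Omega (k : nat) (a1 a2 a3 a4 : L -> R) (E : R) (W : lfam R n) : Prop :=
  energy k a1 a2 a3 a4 W <= E.

Definition costA (a1 a2 a3 : L -> R) (T : forall u : L, {set 'I_(n u)}) : lfam R n :=
  fun u j => if j \in T u then a1 u + a3 u else a2 u + a3 u.

Definition knap_feasible (A : lfam R n) (C : R) (xi : lfam R n) : Prop :=
  binary xi /\ inner A xi <= C.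

Definition knap_optimal (Z A : lfam R n) (C : R) (xi : lfam R n) : Prop :=
  knap_feasible A C xi /\
  forall xi', knap_feasible A C xi' -> inner (hadamard Z Z) xi' <= inner (hadamard Z Z) xi.

End Defs.

(* The loss of a projection W onto Omega is at least the squared mass of Z
   outside the support of W, and Z masked by a binary xi attains exactly
   ||Z||^2 - <Z ⊙ Z, xi>; so it suffices that every support of a W in Omega
   can be traded for a knapsack-feasible index set carrying at least as much
   squared mass, and that every knapsack-feasible mask lies in Omega.  The
   energy of a layer with m nonzeros is the cost of any m indices of which
   exactly min(k, m) lie in the top set T; an exchange argument moves a
   support into this shape without losing squared mass, and the other
   direction holds because alpha_1 <= alpha_2 makes indices outside T the
   more expensive ones. *)
From HB Require Import structures.
From mathcomp Require Import all_boot all_order all_algebra.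
From mathcomp Require Import zify ring lra.
Set Implicit Arguments. Unset Strict Implicit. Unset Printing Implicit Defensive.
Import Order.TTheory GRing.Theory Num.Theory.
Local Open Scope ring_scope.

Section TopSetExchange.
Variables (R : realFieldType) (I : finType) (T : {set I}) (z : I -> R).
Hypothesis z_top : forall j j', j \in T -> j' \notin T -> z j' <= z j.

Lemma top_set_swap {S : {set I}} {j j' : I} :
  j \in S :\: T -> j' \in T :\: S ->
  [/\ #|j' |: (S :\ j)| = #|S|, (#|(j' |: (S :\ j)) :\: T| < #|S :\: T|)%N &
      \sum_(i in S) z i <= \sum_(i in j' |: (S :\ j)) z i].
Proof.
rewrite !inE => /andP[jNT jS] /andP[j'NS j'T].
have j'NSj : j' \notin S :\ j by rewrite !inE (negbTE j'NS) andbF.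
split.
- by rewrite cardsU1 j'NSj (cardsD1 j S) jS.
- apply: proper_card; apply/properP; split.
    apply/subsetP => x; rewrite !inE.
    case/andP=> xNT /orP[/eqP xj' | /andP[_ ->]]; last by rewrite xNT.
    by rewrite xj' j'T in xNT.
  exists j; first by rewrite !inE jNT jS.
  rewrite !inE eqxx /= orbF; apply/negP => /andP[_ /eqP jj'].
  by rewrite jj' j'T in jNT.
- by rewrite (big_setD1 j jS) big_setU1 //= lerD2r; apply: z_top.
Qed.

Lemma top_set_exchange (S : {set I}) : exists S' : {set I},
  [/\ #|S'| = #|S|, #|S' :&: T| = minn #|T| #|S| &
      \sum_(j in S) z j <= \sum_(j in S') z j].
Proof.
elim: {S}_.+1 {-2}S (ltnSn #|S :\: T|) => // m IH S ltSm.
case: (pickP [pred j in S :\: T]) => [j /= jST|noST]; last first.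
  have sST : S \subset T.
    by rewrite -setD_eq0; apply/eqP/setP => x; rewrite in_set0; exact: noST.
  by exists S; rewrite (setIidPl sST) (minn_idPr (subset_leq_card sST)).
case: (pickP [pred j in T :\: S]) => [j' /= j'TS|noTS]; last first.
  have sTS : T \subset S.
    by rewrite -setD_eq0; apply/eqP/setP => x; rewrite in_set0; exact: noTS.
  by exists S; rewrite setIC (setIidPl sTS) (minn_idPl (subset_leq_card sTS)).
have [cardS2 ltS2 leS2] := top_set_swap jST j'TS.
have [S' [cardS' capS' leS']] := IH _ (leq_trans ltS2 (ltnSE ltSm)).
by exists S'; rewrite cardS' capS' cardS2; split=> //; apply: le_trans leS'.
Qed.

End TopSetExchange.

Definition layer_energy {R : realFieldType} (k m : nat) (b1 b2 b3 : R) : R :=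
  b1 * (minn k m)%:R + b2 * (m - k)%:R + b3 * m%:R.

Lemma layer_energyE (R : realFieldType) (k m : nat) (b1 b2 b3 : R) :
  layer_energy k m b1 b2 b3 = (b1 + b3) *+ minn k m + (b2 + b3) *+ (m - minn k m).
Proof.
rewrite /layer_energy; have -> : (m - k = m - minn k m)%N by lia.
rewrite -(mulr_natr (b1 + b3)) -(mulr_natr (b2 + b3)) natrB; last exact: geq_minr.
ring.
Qed.

Lemma layer_energy_le (R : realFieldType) (k m q : nat) (b1 b2 b3 : R) :
  b1 <= b2 -> (q <= minn k m)%N ->
  layer_energy k m b1 b2 b3 <= (b1 + b3) *+ q + (b2 + b3) *+ (m - q).
Proof.
move=> le12 le_q; rewrite layer_energyE.
have le_qm : (q <= m)%N by apply: leq_trans le_q (geq_minr _ _).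
rewrite -!(mulr_natr (b1 + b3)) -!(mulr_natr (b2 + b3)) !natrB ?geq_minr // -subr_ge0.
have -> : (b1 + b3) * q%:R + (b2 + b3) * (m%:R - q%:R)
    - ((b1 + b3) * (minn k m)%:R + (b2 + b3) * (m%:R - (minn k m)%:R))
    = (b2 - b1) * ((minn k m)%:R - q%:R) by ring.
by rewrite mulr_ge0 // subr_ge0 // ler_nat.
Qed.

Lemma layer_energy_mono (R : realFieldType) (k m m' : nat) (b1 b2 b3 : R) :
  0 <= b1 -> 0 <= b2 -> 0 <= b3 -> (m' <= m)%N ->
  layer_energy k m' b1 b2 b3 <= layer_energy k m b1 b2 b3.
Proof.
move=> b1_ge0 b2_ge0 b3_ge0 le_m.
by rewrite !lerD // ler_wpM2l // ler_nat; lia.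
Qed.

Lemma sum_if_in_set (R : realFieldType) (I : finType) (S T : {set I}) (b1 b2 : R) :
  \sum_(j in S) (if j \in T then b1 else b2) = b1 *+ #|S :&: T| + b2 *+ #|S :\: T|.
Proof.
rewrite (big_setID T) -!sumr_const; congr (_ + _); apply: eq_bigr => j.
  by rewrite inE => /andP[_ ->].
by rewrite inE => /andP[/negbTE -> _].
Qed.

Lemma card_setDI (I : finType) (S T : {set I}) : #|S :\: T| = (#|S| - #|S :&: T|)%N.
Proof. by rewrite -(cardsID T S) addKn. Qed.

Section Families.
Variables (R : realFieldType) (L : finType) (n : L -> nat).

Definition indicator (S : forall u, {set 'I_(n u)}) : lfam R n :=
  fun u j => if j \in S u then 1 else 0.

Definition ones (xi : lfam R n) (u : L) : {set 'I_(n u)} := [set j | xi u j == 1].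

Definition support (W : lfam R n) (u : L) : {set 'I_(n u)} := [set j | W u j != 0].

Lemma nnzE (W : lfam R n) u : nnz W u = #|support W u|.
Proof. by rewrite cardsE. Qed.

Lemma indicator_binary S : binary (indicator S).
Proof. by move=> u j; rewrite /indicator; case: (_ \in _); [right | left]. Qed.

Lemma inner_indicator (X : lfam R n) S :
  inner X (indicator S) = \sum_u \sum_(j in S u) X u j.
Proof.
apply: eq_bigr => u _; rewrite [RHS]big_mkcond; apply: eq_bigr => j _.
by rewrite /indicator; case: (_ \in _); rewrite ?mulr1 ?mulr0.
Qed.

Lemma inner_binary (X xi : lfam R n) :
  binary xi -> inner X xi = \sum_u \sum_(j in ones xi u) X u j.
Proof.
move=> xi_bin; rewrite -inner_indicator; apply: eq_bigr => u _.
apply: eq_bigr => j _; rewrite /indicator inE.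
by case: (xi_bin u j) => ->; rewrite ?eqxx // eq_sym oner_eq0.
Qed.

Lemma sqnorm_sub_mask (Z xi : lfam R n) : binary xi ->
  sqnorm (fsub (hadamard xi Z) Z) = sqnorm Z - inner (hadamard Z Z) xi.
Proof.
move=> xi_bin; rewrite /sqnorm /inner -sumrB; apply: eq_bigr => u _.
rewrite -sumrB; apply: eq_bigr => j _.
by rewrite /fsub /hadamard; case: (xi_bin u j) => ->; ring.
Qed.

Lemma sqnorm_sub_ge (Z W : lfam R n) :
  sqnorm Z - \sum_u \sum_(j in support W u) Z u j ^+ 2 <= sqnorm (fsub W Z).
Proof.
rewrite /sqnorm -sumrB; apply: ler_sum => u _.
rewrite [X in _ - X]big_mkcond -sumrB; apply: ler_sum => j _.
rewrite inE /fsub; case: eqP => [-> | _] /=.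
  by rewrite subr0 sub0r sqrrN.
by rewrite subrr sqr_ge0.
Qed.

Lemma knap_optimal_exists (Z A : lfam R n) (C : R) :
  0 <= C -> exists xi, knap_optimal Z A C xi.
Proof.
move=> C_ge0.
pose feasible (F : {dffun forall u, {set 'I_(n u)}}) := inner A (indicator F) <= C.
pose value (F : {dffun forall u, {set 'I_(n u)}}) := inner (hadamard Z Z) (indicator F).
have feasible0 : feasible [ffun u => set0].
  by rewrite /feasible inner_indicator big1 // => u _; rewrite ffunE big_set0.
case: (arg_maxP value feasible0) => F feasF maxF.
exists (indicator F); split; first by split; [apply: indicator_binary |].
move=> xi [xi_bin xi_le].
pose F' : {dffun forall u, {set 'I_(n u)}} := [ffun u => ones xi u].
have innerF' X : inner X xi = inner X (indicator F').
  by rewrite inner_binary // inner_indicator; apply: eq_bigr => u _; rewrite ffunE.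
by rewrite innerF'; apply: maxF; rewrite /feasible -innerF'.
Qed.

Lemma energy_layers (k : nat) (a1 a2 a3 a4 : L -> R) (W : lfam R n) :
  energy k a1 a2 a3 a4 W =
  \sum_u layer_energy k (nnz W u) (a1 u) (a2 u) (a3 u) + \sum_u a4 u.
Proof. by rewrite -big_split. Qed.

End Families.

Arguments indicator {R L n} S.

Section Projection.
Variables (R : realFieldType) (L : finType) (n : L -> nat).
(* Declared without implicit arguments so that [Z u j] keeps [u] explicit. *)
Unset Implicit Arguments.
Variables (Z : lfam R n) (k : nat) (a1 a2 a3 a4 : L -> R) (E : R).
Set Implicit Arguments.
Variable T : forall u : L, {set 'I_(n u)}.
Hypotheses (ha1 : forall u, 0 <= a1 u) (ha2 : forall u, 0 <= a2 u).
Hypotheses (ha3 : forall u, 0 <= a3 u) (ha12 : forall u, a1 u <= a2 u).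
Hypothesis hTcard : forall u, #|T u| = minn k (n u).
Hypothesis hTtop : forall u (j j' : 'I_(n u)),
  j \in T u -> j' \notin T u -> `|Z u j'| <= `|Z u j|.

Local Notation A := (costA a1 a2 a3 T).
Local Notation C := (E - \sum_(u : L) a4 u).

Lemma costA_sum u (S : {set 'I_(n u)}) :
  \sum_(j in S) A j = (a1 u + a3 u) *+ #|S :&: T u| + (a2 u + a3 u) *+ #|S :\: T u|.
Proof. exact: sum_if_in_set. Qed.

Lemma layer_energy_le_costA u (S : {set 'I_(n u)}) :
  layer_energy k #|S| (a1 u) (a2 u) (a3 u) <= \sum_(j in S) A j.
Proof.
have capT : (#|S :&: T u| <= #|T u|)%N by rewrite subset_leq_card ?subsetIr.
have capS : (#|S :&: T u| <= #|S|)%N by rewrite subset_leq_card ?subsetIl.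
rewrite costA_sum card_setDI.
apply: layer_energy_le => //; rewrite leq_min capS andbT.
by apply: leq_trans capT _; rewrite hTcard geq_minl.
Qed.

Lemma layer_energy_eq_costA u (S : {set 'I_(n u)}) :
  #|S :&: T u| = minn k #|S| ->
  layer_energy k #|S| (a1 u) (a2 u) (a3 u) = \sum_(j in S) A j.
Proof.
by move=> capS; rewrite costA_sum layer_energyE card_setDI capS.
Qed.

Lemma Omega_mask xi : knap_feasible A C xi -> Omega k a1 a2 a3 a4 E (hadamard xi Z).
Proof.
move=> [xi_bin xi_le]; rewrite /Omega energy_layers -lerBrDr.
apply: le_trans _ xi_le; rewrite inner_binary //; apply: ler_sum => u _.
apply: le_trans (layer_energy_le_costA (ones xi u)).
rewrite nnzE; apply: layer_energy_mono => //; apply: subset_leq_card.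
apply/subsetP => j; rewrite !inE /hadamard.
by case: (xi_bin u j) => ->; rewrite ?mul0r ?eqxx.
Qed.

Lemma Omega_support_knap_bound W : Omega k a1 a2 a3 a4 E W ->
  exists2 xi, knap_feasible A C xi &
    \sum_u \sum_(j in support W u) Z u j ^+ 2 <= inner (hadamard Z Z) xi.
Proof.
move=> WO.
have sq_top u (j j' : 'I_(n u)) : j \in T u -> j' \notin T u -> Z u j' ^+ 2 <= Z u j ^+ 2.
  move=> jT j'T.
  rewrite -(real_normK (num_real (Z u j))) -(real_normK (num_real (Z u j'))).
  by rewrite ler_sqr ?nnegrE ?normr_ge0 //; apply: hTtop.
have [S /all_and3 [cardS capS leS]] := fin_all_exists (fun u =>
  top_set_exchange (sq_top u) (support W u)).
have capS' u : #|S u :&: T u| = minn k #|S u|.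
  have le_n : (#|support W u| <= n u)%N.
    by apply: leq_trans (max_card _) _; rewrite card_ord.
  by rewrite capS hTcard cardS -minnA (minn_idPr le_n).
exists (indicator S).
  split; first exact: indicator_binary.
  rewrite inner_indicator (eq_bigr (fun u => layer_energy k (nnz W u) (a1 u) (a2 u) (a3 u))).
    by rewrite lerBrDr -energy_layers.
  by move=> u _; rewrite nnzE -cardS (layer_energy_eq_costA (capS' u)).
rewrite inner_indicator; apply: ler_sum => u _; apply: le_trans (leS u) _.
by apply: ler_sum => j _; rewrite /hadamard expr2.
Qed.

End Projection.

Theorem theorem1 (R : realFieldType) (L : finType) (n : L -> nat)
  (Z : lfam R n) (k : nat) (a1 a2 a3 a4 : L -> R) (E : R)
  (T : forall u : L, {set 'I_(n u)})
  (hk : (0 < k)%N)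
  (ha1 : forall u, 0 <= a1 u) (ha2 : forall u, 0 <= a2 u)
  (ha3 : forall u, 0 <= a3 u) (ha4 : forall u, 0 <= a4 u)
  (ha12 : forall u, a1 u <= a2 u)
  (hC : 0 <= E - \sum_(u : L) a4 u)
  (hTcard : forall u, #|T u| = minn k (n u))
  (hTtop : forall u (j j' : 'I_(n u)), j \in T u -> j' \notin T u -> `|Z u j'| <= `|Z u j|) :
  let C := E - \sum_(u : L) a4 u in
  let A := costA a1 a2 a3 T in
  (exists xi, knap_optimal Z A C xi) /\
  forall xi, knap_optimal Z A C xi ->
    [/\ Omega k a1 a2 a3 a4 E (hadamard xi Z),
        (forall W, Omega k a1 a2 a3 a4 E W ->
           sqnorm (fsub (hadamard xi Z) Z) <= sqnorm (fsub W Z)) &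
        sqnorm (fsub (hadamard xi Z) Z) = sqnorm Z - inner (hadamard Z Z) xi].
Proof.
move=> C A; split; first exact: knap_optimal_exists.
move=> xi [[xi_bin xi_le] xi_max].
have loss_xi := sqnorm_sub_mask Z xi_bin.
split=> //; first exact: Omega_mask.
move=> W WO; have [xi' xi'_feas le_xi'] := Omega_support_knap_bound hTcard hTtop WO.
have := xi_max _ xi'_feas; have := sqnorm_sub_ge Z W.
by rewrite loss_xi; lra.
Qed.
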